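(* Let $I\subset[0,\infty)$ be an interval, let $a,b\in I^\circ$ with $a<b$, and let $f:I\to\mathbb{R}$ be twice differentiable on $I^\circ$ with $f''\in L^1([a,b])$. Assume $|f''|$ is $h$-convex on $[a,b]$. Then $$\left|\frac{1}{b-a}\int_a^b f(x)\,dx-f\Big(\frac{a+b}{2}\Big)\right|\le (b-a)^2\,\frac{|f''(a)|+|f''(b)|}{2}\int_0^1 m(t)h(t)\,dt,$$ where $m(t)=t^2$ for $t\in[0,\frac12)$ and $m(t)=(1-t)^2$ for $t\in[\frac12,1]$.
   Context: Let $J$ be an interval with $(0,1)\subseteq J$ and $h:J\to\mathbb{R}$ a non-negative function, not identically zero, which is Lebesgue integrable on $(0,1)$. A non-negative function $g$ defined on an interval $K$ is called $h$-convex on $K$ if for all $x,y\in K$ and all $t\in(0,1)$: $g(tx+(1-t)y)\le h(t)g(x)+h(1-t)g(y)$. $I^\circ$ denotes the interior of $I$. *)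

From Stdlib Require Import Reals Lra List.
Open Scope R_scope.

Definition is_interval (I : R -> Prop) : Prop :=
  forall x y z, I x -> I z -> x <= y <= z -> I y.

Definition h_convex (h g : R -> R) (K : R -> Prop) : Prop :=
  (forall x, K x -> 0 <= g x) /\
  forall x y t, K x -> K y -> 0 < t < 1 ->
    g (t * x + (1 - t) * y) <= h t * g x + h (1 - t) * g y.

(* ---- Henstock-Kurzweil (gauge) integral on [a,b] ----
   A tagged division of [a,b] is a list of (tag, right endpoint) pairs;
   the left endpoint of each piece is the previous right endpoint. *)
Fixpoint fine_tdiv (delta : R -> R) (a b : R) (l : list (R * R)) : Prop :=
  match l with
  | nil => a = b
  | (t, c) :: l' =>
      a < c /\ a <= t <= c /\ t - delta t < a /\ c < t + delta t /\
      fine_tdiv delta c b l'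
  end.

Fixpoint rsum (f : R -> R) (a : R) (l : list (R * R)) : R :=
  match l with
  | nil => 0
  | (t, c) :: l' => f t * (c - a) + rsum f c l'
  end.

Definition HK_integral (f : R -> R) (a b v : R) : Prop :=
  forall eps, 0 < eps ->
    exists delta : R -> R, (forall x, 0 < delta x) /\
      forall l, fine_tdiv delta a b l -> Rabs (rsum f a l - v) < eps.

(* Lebesgue integrability on [a,b] = absolute gauge integrability
   (a classical theorem); the Lebesgue integral then equals the gauge integral. *)
Definition lebesgue_integrable (f : R -> R) (a b : R) : Prop :=
  (exists v, HK_integral f a b v) /\
  (exists w, HK_integral (fun x => Rabs (f x)) a b w).

Definition m_fun (t : R) : R :=
  if Rlt_dec t (1/2) then t ^ 2 else (1 - t) ^ 2.

(* With x(t) = t a + (1 - t) b, two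
   integrations by parts give
     (b - a)^2 \int_0^1 m(t) f''(x(t)) dt = 2 ((1/(b-a)) \int_a^b f - f((a+b)/2));
   here this is the fundamental theorem of calculus, which for the gauge integral holds
   for every derivative, so no integrability of f'' (nor positivity of h) is needed.
   h-convexity bounds |f''(x(t))| by h(t) |f''(a)| + h(1-t) |f''(b)|, and the symmetry
   m(1-t) = m(t) turns both resulting integrals into \int_0^1 m h.  That m h is
   integrable at all is the multiplier theorem: a continuous function times an
   absolutely integrable one is integrable. *)

From Stdlib Require Import Reals Lra Lia List Classical ClassicalEpsilon.
Open Scope R_scope.

Lemma Rabs_le_iff x e : Rabs x <= e <-> -e <= x <= e.
Proof. unfold Rabs; destruct (Rcase_abs x); split; intros; lra. Qed.

Lemma Rabs_lt_iff x e : Rabs x < e <-> -e < x < e.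
Proof. unfold Rabs; destruct (Rcase_abs x); split; intros; lra. Qed.

Lemma fine_tdiv_le d l : forall a b, fine_tdiv d a b l -> a <= b.
Proof.
  induction l as [|[t c] l IH]; simpl; intros a b H.
  - lra.
  - destruct H as (Hac & _ & _ & _ & Hl). apply IH in Hl. lra.
Qed.

Lemma fine_tdiv_nil d a l : fine_tdiv d a a l -> l = nil.
Proof.
  destruct l as [|[t c] l]; simpl; auto.
  intros (Hac & _ & _ & _ & Hl). apply fine_tdiv_le in Hl. lra.
Qed.

Lemma fine_tdiv_mono d d' l : (forall x, d x <= d' x) ->
  forall a b, fine_tdiv d a b l -> fine_tdiv d' a b l.
Proof.
  intros Hd; induction l as [|[t c] l IH]; simpl; intros a b H; auto.
  destruct H as (H1 & H2 & H3 & H4 & H5). specialize (Hd t).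
  repeat split; try lra. apply IH; auto.
Qed.

Lemma fine_tdiv_min_l d1 d2 a b l :
  fine_tdiv (fun x => Rmin (d1 x) (d2 x)) a b l -> fine_tdiv d1 a b l.
Proof. apply fine_tdiv_mono; intros; apply Rmin_l. Qed.

Lemma fine_tdiv_min_r d1 d2 a b l :
  fine_tdiv (fun x => Rmin (d1 x) (d2 x)) a b l -> fine_tdiv d2 a b l.
Proof. apply fine_tdiv_mono; intros; apply Rmin_r. Qed.

Lemma fine_tdiv_app d l1 : forall a c b l2,
  fine_tdiv d a c l1 -> fine_tdiv d c b l2 -> fine_tdiv d a b (l1 ++ l2).
Proof.
  induction l1 as [|[t c'] l IH]; simpl; intros a c b l2 H1 H2.
  - subst; auto.
  - destruct H1 as (H1 & H3 & H4 & H5 & H6). repeat split; try lra.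
    eapply IH; eauto.
Qed.

Lemma rsum_app d f l1 : forall a c l2, fine_tdiv d a c l1 ->
  rsum f a (l1 ++ l2) = rsum f a l1 + rsum f c l2.
Proof.
  induction l1 as [|[t c'] l IH]; simpl; intros a c l2 H1.
  - subst; ring.
  - destruct H1 as (_ & _ & _ & _ & H). rewrite (IH _ _ _ H). ring.
Qed.

Lemma rsum_ext f g l : (forall x, f x = g x) -> forall a, rsum f a l = rsum g a l.
Proof. intros H; induction l as [|[t c] l IH]; simpl; intros a; auto. rewrite H, IH; auto. Qed.

Lemma rsum_plus f g l : forall a, rsum (fun x => f x + g x) a l = rsum f a l + rsum g a l.
Proof. induction l as [|[t c] l IH]; simpl; intros; [ring|rewrite IH; ring]. Qed.

Lemma rsum_scal k f l : forall a, rsum (fun x => k * f x) a l = k * rsum f a l.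
Proof. induction l as [|[t c] l IH]; simpl; intros; [ring|rewrite IH; ring]. Qed.

Lemma rsum_abs_le d f k l : forall a b, fine_tdiv d a b l ->
  (forall t, a <= t <= b -> Rabs (f t) <= k t) -> Rabs (rsum f a l) <= rsum k a l.
Proof.
  induction l as [|[t c] l IH]; simpl; intros a b Hl Hfk.
  - rewrite Rabs_R0; lra.
  - destruct Hl as (H1 & H2 & _ & _ & H5).
    pose proof (fine_tdiv_le _ _ _ _ H5) as Hcb.
    specialize (IH c b H5 ltac:(intros; apply Hfk; lra)). specialize (Hfk t ltac:(lra)).
    eapply Rle_trans; [apply Rabs_triang|]. rewrite Rabs_mult, (Rabs_right (c - a)) by lra.
    apply Rplus_le_compat; auto. apply Rmult_le_compat_r; lra.
Qed.

(* The gauge only constrains tags, so a gauge with [d x <= |x - c|] forces [c] to be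
   a tag of every piece containing it in its interior; the piece is then cut at [c]. *)
Lemma fine_tdiv_split d c : (forall x, x <> c -> d x <= Rabs (x - c)) ->
  forall l a b, a < c < b -> fine_tdiv d a b l ->
  exists l1 l2, fine_tdiv d a c l1 /\ fine_tdiv d c b l2 /\
    forall f, rsum f a l = rsum f a l1 + rsum f c l2.
Proof.
  intros Hd; induction l as [|[t v] l IH]; simpl; intros a b Hacb Hl.
  - lra.
  - destruct Hl as (H1 & H2 & H3 & H4 & H5).
    destruct (Rlt_le_dec v c) as [Hvc|Hvc].
    + pose proof (fine_tdiv_le _ _ _ _ H5).
      destruct (IH v b ltac:(lra) H5) as (l1 & l2 & A1 & A2 & A3).
      exists ((t, v) :: l1), l2. simpl. repeat split; auto; try lra.
      intros f; rewrite A3; ring.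
    + destruct (Req_dec v c) as [Evc|Nvc].
      * subst v. exists ((t, c) :: nil), l. simpl. repeat split; auto; try lra.
        intros f; ring.
      * assert (Htc : t = c).
        { apply NNPP; intros Hn. specialize (Hd t Hn).
          apply Rle_not_lt in Hd; apply Hd. apply Rabs_lt_iff; lra. }
        subst t. exists ((c, c) :: nil), ((c, v) :: l). simpl.
        repeat split; auto; try lra.
        intros f; ring.
Qed.

Lemma gauge_induction (Phi : R -> R -> Prop) a b : a <= b ->
  (forall u c v, a <= u <= c -> c <= v <= b -> Phi u c -> Phi c v -> Phi u v) ->
  (forall x, a <= x <= b -> exists d, 0 < d /\ forall u v, a <= u <= x -> x <= v <= b ->
      x - d < u -> v < x + d -> Phi u v) ->
  Phi a b.
Proof.
  intros Hab Hadd Hloc.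
  assert (Haa : Phi a a).
  { destruct (Hloc a) as [d [Hd H]]; [lra|]. apply H; lra. }
  set (E := fun x => a <= x <= b /\ Phi a x).
  destruct (completeness E) as [s [Hub Hlub]].
  { exists b; intros x [Hx _]; lra. }
  { exists a; split; [lra|auto]. }
  assert (Has : a <= s) by (apply Hub; split; [lra|auto]).
  assert (Hsb : s <= b) by (apply Hlub; intros x [Hx _]; lra).
  destruct (Hloc s) as [d [Hd Hs]]; [lra|].
  assert (Hx : exists x, E x /\ s - d < x).
  { apply NNPP; intros Hn.
    assert (s <= s - d) by (apply Hlub; intros x Ex; apply Rnot_lt_le; intros Hlt; eauto).
    lra. }
  destruct Hx as [x [[Hx Hax] Hxs]].
  assert (Hxs' : x <= s) by (apply Hub; split; auto).
  set (y := Rmin b (s + d / 2)).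
  assert (Hy : s <= y <= b /\ y <= s + d / 2).
  { unfold y; split; [split|]; [apply Rmin_glb| apply Rmin_l| apply Rmin_r]; lra. }
  assert (Hay : Phi a y) by (apply Hadd with x; [lra|lra|auto|apply Hs; lra]).
  assert (y <= s) by (apply Hub; split; [lra|auto]).
  assert (Ey : y = b).
  { unfold y, Rmin in *. destruct (Rle_dec b (s + d / 2)); lra. }
  rewrite <- Ey; auto.
Qed.

Lemma fine_tdiv_exists d a b : (forall x, 0 < d x) -> a <= b -> exists l, fine_tdiv d a b l.
Proof.
  intros Hd Hab.
  apply (gauge_induction (fun u v => exists l, fine_tdiv d u v l)); auto.
  - intros u c v _ _ [l1 H1] [l2 H2]. exists (l1 ++ l2). eapply fine_tdiv_app; eauto.
  - intros x _. exists (d x); split; auto. intros u v Hu Hv Hxu Hxv.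
    destruct (Req_dec u v) as [Euv|Nuv].
    + exists nil; simpl; auto.
    + exists ((x, v) :: nil); simpl; repeat split; lra.
Qed.

Lemma HK_integral_plus f g a b v w : HK_integral f a b v -> HK_integral g a b w ->
  HK_integral (fun x => f x + g x) a b (v + w).
Proof.
  intros Hf Hg eps Heps.
  destruct (Hf (eps / 2)) as [d1 [Hd1 H1]]; [lra|].
  destruct (Hg (eps / 2)) as [d2 [Hd2 H2]]; [lra|].
  exists (fun x => Rmin (d1 x) (d2 x)); split; [intros x; apply Rmin_glb_lt; auto|].
  intros l Hl. rewrite rsum_plus.
  specialize (H1 l (fine_tdiv_min_l _ _ _ _ _ Hl)).
  specialize (H2 l (fine_tdiv_min_r _ _ _ _ _ Hl)).
  apply Rabs_lt_iff in H1; apply Rabs_lt_iff in H2; apply Rabs_lt_iff; lra.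
Qed.

Lemma HK_integral_scal k f a b v : HK_integral f a b v ->
  HK_integral (fun x => k * f x) a b (k * v).
Proof.
  intros Hf eps Heps. pose proof (Rabs_pos k).
  destruct (Hf (eps / (Rabs k + 1))) as [d [Hd H1]]; [apply Rdiv_lt_0_compat; lra|].
  exists d; split; auto. intros l Hl. rewrite rsum_scal.
  replace (k * rsum f a l - k * v) with (k * (rsum f a l - v)) by ring.
  rewrite Rabs_mult. specialize (H1 l Hl).
  apply Rle_lt_trans with (Rabs k * (eps / (Rabs k + 1))); [apply Rmult_le_compat_l; lra|].
  apply Rlt_le_trans with ((Rabs k + 1) * (eps / (Rabs k + 1))).
  - apply Rmult_lt_compat_r; [apply Rdiv_lt_0_compat|]; lra.
  - right; field; lra.
Qed.

Lemma HK_integral_abs_le g k a b G K : a <= b ->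
  HK_integral g a b G -> HK_integral k a b K ->
  (forall x, a <= x <= b -> Rabs (g x) <= k x) -> Rabs G <= K.
Proof.
  intros Hab Hg Hk Hgk.
  apply Rnot_lt_le; intros Hlt.
  set (eps := (Rabs G - K) / 3).
  assert (He : 0 < eps) by (unfold eps; lra).
  destruct (Hg eps He) as [d1 [Hd1 H1]].
  destruct (Hk eps He) as [d2 [Hd2 H2]].
  destruct (fine_tdiv_exists (fun x => Rmin (d1 x) (d2 x)) a b) as [l Hl]; auto.
  { intros x; apply Rmin_glb_lt; auto. }
  specialize (H1 l (fine_tdiv_min_l _ _ _ _ _ Hl)).
  specialize (H2 l (fine_tdiv_min_r _ _ _ _ _ Hl)).
  pose proof (rsum_abs_le _ _ _ _ _ _ Hl Hgk).
  pose proof (Rabs_triang_inv G (rsum g a l)).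
  rewrite <- Rabs_Ropp, Ropp_minus_distr in H1.
  apply Rabs_lt_iff in H2. unfold eps in *; lra.
Qed.

Fixpoint reflect_tdiv (c a : R) (l : list (R * R)) : list (R * R) :=
  match l with
  | nil => nil
  | (t, a') :: l' => reflect_tdiv c a' l' ++ ((c - t, c - a) :: nil)
  end.

Lemma reflect_tdiv_fine c d d' (Hd : forall t, d' (c - t) = d t) l :
  forall a b, fine_tdiv d a b l -> fine_tdiv d' (c - b) (c - a) (reflect_tdiv c a l).
Proof.
  induction l as [|[t a'] l IH]; simpl; intros a b Hl.
  - subst; auto.
  - destruct Hl as (H1 & H2 & H3 & H4 & H5).
    eapply fine_tdiv_app; [apply IH; eauto|]. simpl. rewrite Hd. repeat split; lra.
Qed.

Lemma reflect_tdiv_rsum c d d' (Hd : forall t, d' (c - t) = d t) k k'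
  (Hk : forall t, k' (c - t) = k t) l :
  forall a b, fine_tdiv d a b l -> rsum k' (c - b) (reflect_tdiv c a l) = rsum k a l.
Proof.
  induction l as [|[t a'] l IH]; simpl; intros a b Hl; auto.
  destruct Hl as (_ & _ & _ & _ & H5).
  rewrite (rsum_app _ _ _ _ (c - a') _ (reflect_tdiv_fine c d d' Hd l a' b H5)).
  rewrite (IH a' b H5). simpl. rewrite Hk. ring.
Qed.

Lemma HK_integral_reflect k a b c v : HK_integral k a b v ->
  HK_integral (fun s => k (c - s)) (c - b) (c - a) v.
Proof.
  intros Hk eps Heps. destruct (Hk eps Heps) as [d [Hd H1]].
  exists (fun s => d (c - s)); split; [intros; apply Hd|].
  intros l Hl.
  pose proof (reflect_tdiv_fine c _ d (fun t => eq_refl) l _ _ Hl) as F.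
  rewrite <- (reflect_tdiv_rsum c _ d (fun t => eq_refl) _ k (fun t => eq_refl) l _ _ Hl).
  replace (c - (c - a)) with a in * by ring. replace (c - (c - b)) with b in F by ring.
  auto.
Qed.

Lemma derivable_pt_lim_approx P x l : derivable_pt_lim P x l ->
  forall eps, 0 < eps -> exists d, 0 < d /\
    forall y, Rabs (y - x) < d -> Rabs (P y - P x - l * (y - x)) <= eps * Rabs (y - x).
Proof.
  intros HP eps Heps. destruct (HP eps Heps) as [del Hdel].
  exists del; split; [apply cond_pos|]. intros y Hy.
  destruct (Req_dec y x) as [E|N].
  - subst. replace (P x - P x - l * (x - x)) with 0 by ring.
    rewrite Rabs_R0. pose proof (Rabs_pos (x - x)); nra.
  - specialize (Hdel (y - x) ltac:(lra) Hy). replace (x + (y - x)) with y in Hdel by ring.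
    replace (P y - P x - l * (y - x)) with ((y - x) * ((P y - P x) / (y - x) - l))
      by (field; lra).
    rewrite Rabs_mult, Rmult_comm. apply Rmult_le_compat_r; [apply Rabs_pos|lra].
Qed.

Lemma derivable_pt_lim_straddle P x l : derivable_pt_lim P x l ->
  forall eps, 0 < eps -> exists d, 0 < d /\ forall u v, u <= x <= v ->
    x - d < u -> v < x + d -> Rabs (P v - P u - l * (v - u)) <= eps * (v - u).
Proof.
  intros HP eps Heps.
  destruct (derivable_pt_lim_approx P x l HP (eps / 2)) as [d [Hd H]]; [lra|].
  exists d; split; auto. intros u v Hx Hu Hv.
  specialize (H u ltac:(apply Rabs_lt_iff; lra)) as Hu'.
  specialize (H v ltac:(apply Rabs_lt_iff; lra)) as Hv'.
  rewrite (Rabs_left1 (u - x)) in Hu' by lra. rewrite (Rabs_right (v - x)) in Hv' by lra.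
  apply Rabs_le_iff in Hu'; apply Rabs_le_iff in Hv'; apply Rabs_le_iff; lra.
Qed.

Lemma HK_integral_derivative P g a b : a <= b ->
  (forall x, a <= x <= b -> derivable_pt_lim P x (g x)) ->
  HK_integral g a b (P b - P a).
Proof.
  intros Hab HP eps Heps.
  set (e := eps / (b - a + 1)).
  assert (He : 0 < e) by (apply Rdiv_lt_0_compat; lra).
  destruct (choice (fun x d => 0 < d /\ (a <= x <= b -> forall u v, u <= x <= v ->
      x - d < u -> v < x + d -> Rabs (P v - P u - g x * (v - u)) <= e * (v - u))))
    as [D HD].
  { intros x. destruct (Rle_dec a x); [destruct (Rle_dec x b)|].
    - destruct (derivable_pt_lim_straddle P x (g x) (HP x ltac:(lra)) e He) as [d Hd].
      exists d; split; [|intros _]; apply Hd.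
    - exists 1; split; [lra|intros; lra].
    - exists 1; split; [lra|intros; lra]. }
  exists D; split; [intros x; apply HD|].
  assert (Hind : forall l u, a <= u -> fine_tdiv D u b l ->
     Rabs (rsum g u l - (P b - P u)) <= e * (b - u)).
  { induction l as [|[t c] l IH]; simpl; intros u Hu Hl.
    - subst. replace (0 - (P b - P b)) with 0 by ring. rewrite Rabs_R0. lra.
    - destruct Hl as (H1 & H2 & H3 & H4 & H5).
      pose proof (fine_tdiv_le _ _ _ _ H5) as Hcb.
      pose proof (proj2 (HD t) ltac:(lra) u c ltac:(lra) H3 H4) as A1.
      pose proof (IH c ltac:(lra) H5) as A2.
      apply Rabs_le_iff in A1; apply Rabs_le_iff in A2; apply Rabs_le_iff; lra. }
  intros l Hl. eapply Rle_lt_trans; [exact (Hind l a ltac:(lra) Hl)|].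
  assert (e * (b - a + 1) = eps) by (unfold e; field; lra). lra.
Qed.

Fixpoint gauge_min (dn : nat -> R -> R) (n : nat) (x : R) : R :=
  match n with
  | O => dn O x
  | S k => Rmin (gauge_min dn k x) (dn (S k) x)
  end.

Lemma gauge_min_pos dn : (forall n x, 0 < dn n x) -> forall n x, 0 < gauge_min dn n x.
Proof. intros H n x; induction n; simpl; auto. apply Rmin_glb_lt; auto. Qed.

Lemma gauge_min_le dn n x : gauge_min dn n x <= dn n x.
Proof. destruct n; simpl; [lra|apply Rmin_r]. Qed.

Lemma gauge_min_anti dn n m x : (n <= m)%nat -> gauge_min dn m x <= gauge_min dn n x.
Proof.
  intros Hnm; induction Hnm; [lra|].
  simpl. eapply Rle_trans; [apply Rmin_l|auto].
Qed.

Lemma HK_integral_cauchy f a b : a <= b ->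
  (forall eps, 0 < eps -> exists d, (forall x, 0 < d x) /\
     forall l1 l2, fine_tdiv d a b l1 -> fine_tdiv d a b l2 ->
       Rabs (rsum f a l1 - rsum f a l2) <= eps) ->
  exists v, HK_integral f a b v.
Proof.
  intros Hab H.
  destruct (choice (fun n d => (forall x, 0 < d x) /\
     forall l1 l2, fine_tdiv d a b l1 -> fine_tdiv d a b l2 ->
       Rabs (rsum f a l1 - rsum f a l2) <= / (INR n + 1))) as [dn Hdn].
  { intros n; apply H, Rinv_0_lt_compat. pose proof (pos_INR n); lra. }
  set (D := gauge_min dn).
  assert (HD : forall n x, 0 < D n x) by (apply gauge_min_pos; intros; apply Hdn).
  destruct (choice (fun n l => fine_tdiv (D n) a b l)) as [ln Hln].
  { intros n; apply fine_tdiv_exists; auto. }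
  set (S n := rsum f a (ln n)).
  assert (Key : forall N n l, (N <= n)%nat -> fine_tdiv (D N) a b l ->
            Rabs (rsum f a l - S n) <= / (INR N + 1)).
  { intros N n l HNn Hl. apply (proj2 (Hdn N)).
    - eapply fine_tdiv_mono; [|exact Hl]. intros; apply gauge_min_le.
    - eapply fine_tdiv_mono; [|apply Hln]. intros x.
      eapply Rle_trans; [apply gauge_min_anti; exact HNn| apply gauge_min_le]. }
  assert (Hinv : forall N : nat, (0 < N)%nat -> / (INR N + 1) < / INR N).
  { intros N HN. apply lt_0_INR in HN. apply Rinv_lt_contravar; nra. }
  destruct (R_complete S) as [L HL].
  { intros eps Heps. destruct (archimed_cor1 eps Heps) as [N [HN1 HN2]].
    exists N. intros n m Hn Hm. unfold R_dist.
    specialize (Key N m (ln n) Hm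
      ltac:(eapply fine_tdiv_mono; [|apply Hln]; intros; apply gauge_min_anti; lia)).
    specialize (Hinv N HN2). unfold S at 1. lra. }
  exists L. intros eps Heps.
  destruct (archimed_cor1 (eps / 2)) as [N [HN1 HN2]]; [lra|].
  destruct (HL (eps / 2)) as [M HM]; [lra|].
  exists (D N); split; auto.
  intros l Hl.
  specialize (HM (max N M) ltac:(lia)). unfold R_dist in HM.
  specialize (Key N (max N M) l ltac:(lia) Hl).
  specialize (Hinv N HN2).
  apply Rabs_le_iff in Key; apply Rabs_lt_iff in HM; apply Rabs_lt_iff; lra.
Qed.

Lemma HK_integral_sub_cauchy g a b w u v : HK_integral g a b w ->
  a <= u -> u <= v -> v <= b ->
  forall eps, 0 < eps -> exists d, (forall x, 0 < d x) /\
    forall l1 l2, fine_tdiv d u v l1 -> fine_tdiv d u v l2 ->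
      Rabs (rsum g u l1 - rsum g u l2) <= eps.
Proof.
  intros Hg Hau Huv Hvb eps Heps.
  destruct (Hg (eps / 2)) as [d [Hd H1]]; [lra|].
  exists d; split; auto.
  destruct (fine_tdiv_exists d a u Hd Hau) as [p Hp].
  destruct (fine_tdiv_exists d v b Hd Hvb) as [r Hr].
  assert (K : forall l, fine_tdiv d u v l ->
     Rabs (rsum g a p + rsum g u l + rsum g v r - w) < eps / 2).
  { intros l Hl. specialize (H1 (p ++ l ++ r)).
    rewrite (rsum_app d g p a u), (rsum_app d g l u v), <- Rplus_assoc in H1 by auto.
    apply H1. eapply fine_tdiv_app; [exact Hp|]. eapply fine_tdiv_app; eauto. }
  intros l1 l2 Hl1 Hl2. specialize (K l1 Hl1) as K1. specialize (K l2 Hl2) as K2.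
  apply Rabs_lt_iff in K1; apply Rabs_lt_iff in K2; apply Rabs_le_iff; lra.
Qed.

(* Multiplier theorem, via the Cauchy criterion: where [m] is within [eta] of a constant,
   the oscillation of the sums of [m g] is that of the sums of [g] plus [eta] times the
   sums of [|g|]; gauge induction makes this global. *)
Definition rsum_oscillation_le (f k : R -> R) (e u v : R) : Prop :=
  exists d, (forall x, 0 < d x) /\ forall P Q, fine_tdiv d u v P -> fine_tdiv d u v Q ->
    Rabs (rsum f u P - rsum f u Q) <= e * (v - u) + rsum k u P + rsum k u Q.

Lemma rsum_oscillation_le_concat f k e u c v : u <= c <= v ->
  rsum_oscillation_le f k e u c -> rsum_oscillation_le f k e c v ->
  rsum_oscillation_le f k e u v.
Proof.
  intros Hucv H1 H2.
  destruct (Req_dec u c) as [<-|Nuc]; auto.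
  destruct (Req_dec c v) as [<-|Ncv]; auto.
  destruct H1 as [d1 [Hd1 H1]], H2 as [d2 [Hd2 H2]].
  set (dc x := if Req_EM_T x c then 1 else Rabs (x - c)).
  set (d x := Rmin (Rmin (d1 x) (d2 x)) (dc x)).
  assert (Hsplit : forall x, x <> c -> d x <= Rabs (x - c)).
  { intros x Hx. eapply Rle_trans; [apply Rmin_r|]. unfold dc.
    destruct (Req_EM_T x c); [contradiction|lra]. }
  exists d; split.
  { intros x; repeat apply Rmin_glb_lt; auto. unfold dc.
    destruct (Req_EM_T x c); [lra|apply Rabs_pos_lt; lra]. }
  intros P Q HP HQ.
  destruct (fine_tdiv_split _ c Hsplit P u v ltac:(lra) HP) as (P1 & P2 & HP1 & HP2 & HPs).
  destruct (fine_tdiv_split _ c Hsplit Q u v ltac:(lra) HQ) as (Q1 & Q2 & HQ1 & HQ2 & HQs).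
  specialize (H1 P1 Q1 (fine_tdiv_min_l _ _ _ _ _ (fine_tdiv_min_l _ _ _ _ _ HP1))
                       (fine_tdiv_min_l _ _ _ _ _ (fine_tdiv_min_l _ _ _ _ _ HQ1))).
  specialize (H2 P2 Q2 (fine_tdiv_min_r _ _ _ _ _ (fine_tdiv_min_l _ _ _ _ _ HP2))
                       (fine_tdiv_min_r _ _ _ _ _ (fine_tdiv_min_l _ _ _ _ _ HQ2))).
  rewrite !HPs, !HQs.
  apply Rabs_le_iff in H1; apply Rabs_le_iff in H2; apply Rabs_le_iff; lra.
Qed.

Lemma rsum_oscillation_le_near_const g m m0 eta e a b w u v :
  HK_integral g a b w -> a <= u <= v -> v <= b -> 0 < e ->
  (forall t, u <= t <= v -> Rabs (m t - m0) <= eta) ->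
  rsum_oscillation_le (fun t => m t * g t) (fun t => eta * Rabs (g t)) e u v.
Proof.
  intros Hg Hu Hv He Hm.
  destruct (Req_dec u v) as [<-|Nuv].
  { exists (fun _ => 1); split; [intros; lra|].
    intros P Q HP HQ. rewrite (fine_tdiv_nil _ _ _ HP), (fine_tdiv_nil _ _ _ HQ). simpl.
    rewrite Rminus_0_r, Rabs_R0. lra. }
  pose proof (Rabs_pos m0) as Hm0.
  set (e2 := e * (v - u) / (Rabs m0 + 1)).
  assert (He2 : 0 < e2) by (apply Rdiv_lt_0_compat; [apply Rmult_lt_0_compat|]; lra).
  destruct (HK_integral_sub_cauchy g a b w u v Hg ltac:(lra) ltac:(lra) Hv e2 He2)
    as [d [Hd Hcauchy]].
  exists d; split; auto.
  assert (Hfrozen : forall P, fine_tdiv d u v P ->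
     Rabs (rsum (fun t => m t * g t) u P - m0 * rsum g u P)
       <= rsum (fun t => eta * Rabs (g t)) u P).
  { intros P HP.
    replace (rsum (fun t => m t * g t) u P - m0 * rsum g u P)
      with (rsum (fun t => (m t - m0) * g t) u P).
    2:{ rewrite (rsum_ext _ (fun t => m t * g t + (- m0) * g t)) by (intros; ring).
        rewrite rsum_plus, rsum_scal. ring. }
    apply (rsum_abs_le _ _ _ _ _ _ HP).
    intros t Ht. rewrite Rabs_mult.
    apply Rmult_le_compat_r; [apply Rabs_pos|auto]. }
  intros P Q HP HQ.
  pose proof (Hfrozen P HP) as FP. pose proof (Hfrozen Q HQ) as FQ.
  assert (Hm0g : Rabs (m0 * rsum g u P - m0 * rsum g u Q) <= e * (v - u)).
  { rewrite <- Rmult_minus_distr_l, Rabs_mult.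
    apply Rle_trans with ((Rabs m0 + 1) * e2).
    - apply Rmult_le_compat; auto using Rabs_pos; lra.
    - right. unfold e2. field. lra. }
  apply Rabs_le_iff in FP; apply Rabs_le_iff in FQ; apply Rabs_le_iff in Hm0g.
  apply Rabs_le_iff; lra.
Qed.

Lemma HK_integrable_mult_continuous g m a b w W : a <= b ->
  HK_integral g a b w -> HK_integral (fun x => Rabs (g x)) a b W ->
  (forall x, a <= x <= b -> forall eta, 0 < eta -> exists rho, 0 < rho /\
     forall t, a <= t <= b -> Rabs (t - x) < rho -> Rabs (m t - m x) <= eta) ->
  exists v, HK_integral (fun x => m x * g x) a b v.
Proof.
  intros Hab Hg HW Hm.
  apply HK_integral_cauchy; auto. intros eps Heps.
  pose proof (Rabs_pos W) as HWp.
  set (e := eps / (2 * (b - a + 1))).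
  set (eta := eps / (4 * (Rabs W + 1))).
  assert (He : 0 < e) by (apply Rdiv_lt_0_compat; lra).
  assert (Heta : 0 < eta) by (apply Rdiv_lt_0_compat; lra).
  destruct (gauge_induction
     (rsum_oscillation_le (fun t => m t * g t) (fun t => eta * Rabs (g t)) e) a b)
     as [d0 [Hd0 H0]]; auto.
  { intros u c v Hc1 Hc2. apply rsum_oscillation_le_concat; lra. }
  { intros x Hx. destruct (Hm x Hx eta Heta) as [rho [Hrho Hr]].
    exists rho; split; auto. intros u v Hu Hv Hxu Hxv.
    apply (rsum_oscillation_le_near_const g m (m x) eta e a b w); try lra; auto.
    intros t Ht. apply Hr; [lra|apply Rabs_lt_iff; lra]. }
  destruct (HW 1 ltac:(lra)) as [dW [HdW HW1]].
  exists (fun x => Rmin (d0 x) (dW x)); split; [intros x; apply Rmin_glb_lt; auto|].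
  intros P Q HP HQ.
  specialize (H0 P Q (fine_tdiv_min_l _ _ _ _ _ HP) (fine_tdiv_min_l _ _ _ _ _ HQ)).
  pose proof (HW1 P (fine_tdiv_min_r _ _ _ _ _ HP)) as WP.
  pose proof (HW1 Q (fine_tdiv_min_r _ _ _ _ _ HQ)) as WQ.
  rewrite !rsum_scal in H0.
  apply Rabs_lt_iff in WP; apply Rabs_lt_iff in WQ.
  assert (eta * (rsum (fun t => Rabs (g t)) a P + rsum (fun t => Rabs (g t)) a Q)
            <= eta * (2 * (Rabs W + 1))).
  { apply Rmult_le_compat_l; [lra|]. pose proof (Rle_abs W). lra. }
  assert (eta * (2 * (Rabs W + 1)) = eps / 2) by (unfold eta; field; lra).
  assert (e * (b - a) <= eps / 2).
  { apply Rle_trans with (e * (b - a + 1)); [apply Rmult_le_compat_l; lra|].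
    right; unfold e; field; lra. }
  apply Rabs_le_iff in H0; apply Rabs_le_iff; lra.
Qed.

Lemma derivable_pt_lim_glue P L Rr x l d : 0 < d ->
  (forall y, x - d < y <= x -> P y = L y) -> (forall y, x <= y < x + d -> P y = Rr y) ->
  derivable_pt_lim L x l -> derivable_pt_lim Rr x l -> derivable_pt_lim P x l.
Proof.
  intros Hd HL HR DL DR eps Heps.
  destruct (DL eps Heps) as [dL HdL], (DR eps Heps) as [dR HdR].
  assert (Hpos : 0 < Rmin d (Rmin dL dR))
    by (repeat apply Rmin_glb_lt; auto; apply cond_pos).
  exists (mkposreal _ Hpos); simpl. intros y Hy0 Hy.
  pose proof (Rmin_l d (Rmin dL dR)). pose proof (Rmin_r d (Rmin dL dR)).
  pose proof (Rmin_l dL dR). pose proof (Rmin_r dL dR).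
  apply Rabs_lt_iff in Hy.
  destruct (Rle_dec y 0).
  - rewrite (HL x), (HL (x + y)) by lra. apply HdL; auto. apply Rabs_lt_iff; lra.
  - rewrite (HR x), (HR (x + y)) by lra. apply HdR; auto. apply Rabs_lt_iff; lra.
Qed.

Lemma derivable_pt_lim_comp_affine f a b t l :
  derivable_pt_lim f (t * a + (1 - t) * b) l ->
  derivable_pt_lim (fun s => f (s * a + (1 - s) * b)) t (l * (a - b)).
Proof.
  intros Hf.
  assert (Hx : derivable_pt_lim (fun s => s * a + (1 - s) * b) t (a - b)).
  { eapply (eq_ind _ (derivable_pt_lim _ t)).
    - repeat first [apply derivable_pt_lim_plus | apply derivable_pt_lim_minus
                   | apply derivable_pt_lim_mult | apply derivable_pt_lim_const
                   | apply derivable_pt_lim_id | apply derivable_pt_lim_opp].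
    - simpl; ring. }
  exact (derivable_pt_lim_comp _ _ t _ _ Hx Hf).
Qed.

Lemma continuous_antiderivative f a b : a <= b ->
  (forall x, a <= x <= b -> continuity_pt f x) ->
  exists F, forall x, a <= x <= b -> derivable_pt_lim F x (f x).
Proof.
  intros Hab Hf. exists (primitive Hab (FTC_P1 Hab Hf)).
  intros x Hx. apply RiemannInt_P28; auto.
Qed.

Lemma interior_interval_segment I a b y : is_interval I ->
  interior I a -> interior I b -> a <= y <= b -> interior I y.
Proof.
  intros HI [da Hda] [db Hdb] Hy.
  assert (Hc : forall c (dc : posreal), included (disc c dc) I -> I c).
  { intros c dc Hdc. apply Hdc. unfold disc. rewrite Rminus_diag, Rabs_R0. apply cond_pos. }
  exists (mkposreal _ (Rmin_pos _ _ (cond_pos da) (cond_pos db))).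
  intros z Hz. unfold disc in Hz; simpl in Hz. apply Rabs_lt_iff in Hz.
  pose proof (Rmin_l da db). pose proof (Rmin_r da db).
  destruct (Rlt_le_dec z a) as [Hza|Hza]; [apply Hda; unfold disc; apply Rabs_lt_iff; lra|].
  destruct (Rlt_le_dec b z) as [Hzb|Hzb]; [apply Hdb; unfold disc; apply Rabs_lt_iff; lra|].
  apply (HI a z b); eauto.
Qed.

Lemma m_fun_nonneg t : 0 <= m_fun t.
Proof. unfold m_fun; destruct (Rlt_dec t (1/2)); apply pow2_ge_0. Qed.

Lemma m_fun_0 : m_fun 0 = 0.
Proof. unfold m_fun; destruct (Rlt_dec 0 (1/2)); [ring|lra]. Qed.

Lemma m_fun_sym t : m_fun (1 - t) = m_fun t.
Proof.
  unfold m_fun.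
  destruct (Rlt_dec (1 - t) (1/2)), (Rlt_dec t (1/2)); try lra; ring.
Qed.

Lemma m_fun_lipschitz s t : 0 <= s <= 1 -> 0 <= t <= 1 ->
  Rabs (m_fun s - m_fun t) <= Rabs (s - t).
Proof.
  assert (Hsq : forall p q, 0 <= p -> 0 <= q -> p + q <= 1 ->
            Rabs (p ^ 2 - q ^ 2) <= Rabs (p - q)).
  { intros p q Hp Hq Hpq. replace (p ^ 2 - q ^ 2) with ((p - q) * (p + q)) by ring.
    rewrite Rabs_mult, (Rabs_right (p + q)) by lra.
    pose proof (Rabs_pos (p - q)). nra. }
  intros Hs Ht. unfold m_fun.
  destruct (Rlt_dec s (1/2)), (Rlt_dec t (1/2)).
  - apply Hsq; lra.
  - eapply Rle_trans; [apply Hsq; lra|]. apply Rabs_le_iff.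
    rewrite (Rabs_left1 (s - t)) by lra. lra.
  - eapply Rle_trans; [apply Hsq; lra|]. apply Rabs_le_iff.
    rewrite (Rabs_right (s - t)) by lra. lra.
  - eapply Rle_trans; [apply Hsq; lra|].
    replace (1 - s - (1 - t)) with (- (s - t)) by ring. rewrite Rabs_Ropp; lra.
Qed.

Lemma h_convex_m_fun_bound h g (K : R -> Prop) a b t : h_convex h g K -> K a -> K b ->
  0 <= t <= 1 ->
  m_fun t * g (t * a + (1 - t) * b) <= m_fun t * h t * g a + m_fun (1 - t) * h (1 - t) * g b.
Proof.
  intros [_ Hconv] Ha Hb Ht. rewrite m_fun_sym.
  destruct (Req_dec t 0) as [->|N0]; [rewrite m_fun_0; lra|].
  destruct (Req_dec t 1) as [->|N1]; [rewrite <- m_fun_sym, Rminus_diag, m_fun_0; lra|].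
  pose proof (Hconv a b t Ha Hb ltac:(lra)). pose proof (m_fun_nonneg t).
  replace (m_fun t * h t * g a + m_fun t * h (1 - t) * g b)
    with (m_fun t * (h t * g a + h (1 - t) * g b)) by ring.
  apply Rmult_le_compat_l; auto.
Qed.

(* An antiderivative of [t |-> (a - b)^2 (t - t0)^2 f''(t a + (1 - t) b)], found by
   integrating by parts twice. *)
Definition kernel_primitive (F f f1 : R -> R) (a b t0 t : R) : R :=
  (t - t0) ^ 2 * (a - b) * f1 (t * a + (1 - t) * b)
  - 2 * (t - t0) * f (t * a + (1 - t) * b) + 2 / (a - b) * F (t * a + (1 - t) * b).

Lemma kernel_primitive_derivative F f f1 f2 a b t0 t : a <> b ->
  derivable_pt_lim F (t * a + (1 - t) * b) (f (t * a + (1 - t) * b)) ->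
  derivable_pt_lim f (t * a + (1 - t) * b) (f1 (t * a + (1 - t) * b)) ->
  derivable_pt_lim f1 (t * a + (1 - t) * b) (f2 (t * a + (1 - t) * b)) ->
  derivable_pt_lim (kernel_primitive F f f1 a b t0) t
    ((a - b) ^ 2 * ((t - t0) ^ 2 * f2 (t * a + (1 - t) * b))).
Proof.
  intros Hab DF Df Df1.
  apply derivable_pt_lim_comp_affine in DF, Df, Df1.
  unfold kernel_primitive.
  eapply (eq_ind _ (derivable_pt_lim _ t)).
  - repeat first [apply derivable_pt_lim_plus | apply derivable_pt_lim_minus
                 | apply derivable_pt_lim_mult | apply derivable_pt_lim_const
                 | apply derivable_pt_lim_id | apply derivable_pt_lim_opp
                 | apply DF | apply Df | apply Df1].
  - simpl. field. lra.
Qed.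

Lemma midpoint_kernel_integral F f f1 f2 a b : a < b ->
  (forall x, a <= x <= b -> derivable_pt_lim F x (f x)) ->
  (forall x, a <= x <= b -> derivable_pt_lim f x (f1 x)) ->
  (forall x, a <= x <= b -> derivable_pt_lim f1 x (f2 x)) ->
  HK_integral (fun t => (b - a) ^ 2 * (m_fun t * f2 (t * a + (1 - t) * b))) 0 1
    (2 * ((F b - F a) / (b - a) - f ((a + b) / 2))).
Proof.
  intros Hab DF Df Df1.
  set (g t := (b - a) ^ 2 * (m_fun t * f2 (t * a + (1 - t) * b))).
  set (K t0 := kernel_primitive F f f1 a b t0).
  assert (DK : forall t0 C t, 0 <= t <= 1 -> m_fun t = (t - t0) ^ 2 ->
            derivable_pt_lim (fun s => K t0 s + C) t (g t)).
  { intros t0 C t Ht Hm.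
    assert (Hx : a <= t * a + (1 - t) * b <= b) by nra.
    replace (g t) with ((a - b) ^ 2 * ((t - t0) ^ 2 * f2 (t * a + (1 - t) * b)) + 0)
      by (unfold g; rewrite Hm; ring).
    apply derivable_pt_lim_plus; [|apply derivable_pt_lim_const].
    apply kernel_primitive_derivative; auto; lra. }
  (* [C] makes the glued antiderivative [P] continuous at [1/2]; it is even
     differentiable there since [m_fun] is continuous. *)
  set (C := K 0 (1/2) - K 1 (1/2)).
  set (P t := if Rlt_dec t (1/2) then K 0 t + 0 else K 1 t + C).
  replace (2 * ((F b - F a) / (b - a) - f ((a + b) / 2))) with (P 1 - P 0).
  2:{ unfold P, C, K, kernel_primitive.
      destruct (Rlt_dec 1 (1/2)), (Rlt_dec 0 (1/2)); try lra.
      replace (1 * a + (1 - 1) * b) with a by ring.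
      replace (0 * a + (1 - 0) * b) with b by ring.
      replace (1 / 2 * a + (1 - 1 / 2) * b) with ((a + b) / 2) by field.
      field. lra. }
  apply HK_integral_derivative; [lra|]. intros t Ht.
  assert (Hleft : forall y, y < 1/2 -> P y = K 0 y + 0)
    by (intros y Hy; unfold P; destruct (Rlt_dec y (1/2)); lra).
  assert (Hright : forall y, 1/2 <= y -> P y = K 1 y + C)
    by (intros y Hy; unfold P; destruct (Rlt_dec y (1/2)); lra).
  assert (Hm0 : t <= 1/2 -> m_fun t = (t - 0) ^ 2).
  { intros. unfold m_fun. destruct (Rlt_dec t (1/2)); [ring|]. replace t with (1/2) by lra. field. }
  assert (Hm1 : 1/2 <= t -> m_fun t = (t - 1) ^ 2).
  { intros. unfold m_fun. destruct (Rlt_dec t (1/2)); [lra|ring]. }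
  destruct (Rtotal_order t (1/2)) as [Hlt|[Heq|Hgt]].
  - apply (derivable_pt_lim_glue P (fun s => K 0 s + 0) (fun s => K 0 s + 0) t _ (1/2 - t));
      try (intros; apply Hleft); try apply DK; lra.
  - apply (derivable_pt_lim_glue P (fun s => K 0 s + 0) (fun s => K 1 s + C) t _ 1);
      try apply DK; try lra.
    + intros y Hy. destruct (Rlt_dec y (1/2)); [apply Hleft; lra|].
      replace y with (1/2) by lra. rewrite Hright by lra. unfold C. ring.
    + intros; apply Hright; lra.
  - apply (derivable_pt_lim_glue P (fun s => K 1 s + C) (fun s => K 1 s + C) t _ (t - 1/2));
      try (intros; apply Hright); try apply DK; lra.
Qed.

Theorem theorem10
  (J : R -> Prop) (h : R -> R)
  (HJ : is_interval J)
  (HJ01 : forall t, 0 < t < 1 -> J t)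
  (Hh_nonneg : forall t, J t -> 0 <= h t)
  (Hh_nonzero : exists t, J t /\ h t <> 0)
  (Hh_int : lebesgue_integrable h 0 1)
  (I : R -> Prop) (HI : is_interval I) (HI0 : forall x, I x -> 0 <= x)
  (a b : R) (Ha : interior I a) (Hb : interior I b) (Hab : a < b)
  (f f1 f2 : R -> R)
  (Hf1 : forall x, interior I x -> derivable_pt_lim f x (f1 x))
  (Hf2 : forall x, interior I x -> derivable_pt_lim f1 x (f2 x))
  (Hf2_L1 : lebesgue_integrable f2 a b)
  (Hconv : h_convex h (fun x => Rabs (f2 x)) (fun x => a <= x <= b)) :
  exists If Imh : R,
    HK_integral f a b If /\
    HK_integral (fun t => m_fun t * h t) 0 1 Imh /\
    Rabs (If / (b - a) - f ((a + b) / 2))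
      <= (b - a) ^ 2 * ((Rabs (f2 a) + Rabs (f2 b)) / 2) * Imh.
Proof.
  destruct Hh_int as [[w Hw] [W HW]].
  destruct (HK_integrable_mult_continuous h m_fun 0 1 w W) as [Imh HImh]; auto; try lra.
  { intros x Hx eta Heta. exists eta; split; auto. intros t Ht Htx.
    pose proof (m_fun_lipschitz t x Ht Hx). lra. }
  assert (Hseg : forall x, a <= x <= b -> interior I x)
    by (intros x Hx; apply (interior_interval_segment I a b x); auto).
  destruct (continuous_antiderivative f a b) as [F HF]; [lra|..].
  { intros x Hx. apply derivable_continuous_pt. exists (f1 x). apply Hf1, Hseg, Hx. }
  exists (F b - F a), Imh. split; [apply HK_integral_derivative; auto; lra|]. split; auto.
  set (A := Rabs (f2 a)). set (B := Rabs (f2 b)).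
  assert (Hmaj : HK_integral
            (fun t => (b - a) ^ 2 * (A * (m_fun t * h t))
                    + (b - a) ^ 2 * (B * (m_fun (1 - t) * h (1 - t)))) 0 1
            ((b - a) ^ 2 * (A * Imh) + (b - a) ^ 2 * (B * Imh))).
  { pose proof (HK_integral_reflect _ 0 1 1 _ HImh) as HImh'.
    replace (1 - 1) with 0 in HImh' by ring. replace (1 - 0) with 1 in HImh' by ring.
    apply HK_integral_plus; apply HK_integral_scal; apply HK_integral_scal; auto. }
  pose proof (HK_integral_abs_le _ _ 0 1 _ _ ltac:(lra)
    (midpoint_kernel_integral F f f1 f2 a b Hab HF
       (fun x Hx => Hf1 x (Hseg x Hx)) (fun x Hx => Hf2 x (Hseg x Hx))) Hmaj) as Hbound.
  assert (Hmid : Rabs (2 * ((F b - F a) / (b - a) - f ((a + b) / 2)))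
                   <= (b - a) ^ 2 * (A * Imh) + (b - a) ^ 2 * (B * Imh)).
  { apply Hbound. intros t Ht.
    pose proof (h_convex_m_fun_bound _ _ _ a b t Hconv ltac:(lra) ltac:(lra) Ht).
    rewrite Rabs_mult, Rabs_mult, Rabs_pos_eq, (Rabs_pos_eq (m_fun t))
      by (apply m_fun_nonneg || apply pow2_ge_0).
    rewrite <- !Rmult_plus_distr_l. apply Rmult_le_compat_l; [apply pow2_ge_0|].
    cbv beta in H. fold A B in H. lra. }
  rewrite Rabs_mult, Rabs_pos_eq in Hmid by lra. lra.
Qed.
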